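(* Let $\Sigma$ be a set and let $1\le p<\infty$. Let $\rho$ be a separating quasi-metric on $\Sigma^*$ that is arbitrarily decomposable of order $p$. Suppose $f:\Sigma\to\mathbb{R}$ is strictly positive and $g:\Sigma\to\mathbb{R}$ is non-negative, and let $\bar f,\bar g$ be their canonical homomorphic extensions to $\Sigma^*$. Assume that for all $x,y\in\Sigma^*$, \[\bar f(x)-\bar f(y)\le\rho^p(x,y)\quad\text{and}\quad \bar g(y)-\bar g(x)\le\rho^p(x,y).\] Then the function $Q:\Sigma^*\times\Sigma^*\to\mathbb{R}$ defined by \[Q(x,y)=\min_{\tilde x\in\mathfrak{F}(x),\ \tilde y\in\mathfrak{F}(y)}\Big(\bar f(x)-\bar f(\tilde x)+\bar g(y)-\bar g(\tilde y)+\rho^p(\tilde x,\tilde y)\Big)^{1/p}\] is a quasi-metric on $\Sigma^*$.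
   Context: $\Sigma^*$ is the free monoid on $\Sigma$ (finite words, concatenation, empty word $e$). A word $u$ is a factor of $v$ if $v=xuy$ for some $x,y\in\Sigma^*$; $\mathfrak{F}(v)$ denotes the set of factors of $v$. The canonical homomorphic extension of $f:\Sigma\to\mathbb{R}$ is $\bar f:\Sigma^*\to\mathbb{R}$ with $\bar f(e)=0$ and $\bar f(x_1\cdots x_n)=\sum_{i=1}^n f(x_i)$. A quasi-metric on $X$ is a map $q:X\times X\to\mathbb{R}_{\ge0}$ with $q(x,y)=q(y,x)=0\iff x=y$ and $q(x,z)\le q(x,y)+q(y,z)$; it is separating if $q(x,y)=0$ implies $x=y$. A function $\rho:\Sigma^*\times\Sigma^*\to\mathbb{R}$ is arbitrarily decomposable of order $p$ if for all $x,y\in\Sigma^*$: (i) for every $y'\in\mathfrak{F}(y)$ there exist $x',x_1^*,x_2^*\in\mathfrak{F}(x)$ with $x=x_1^*x'x_2^*$ and $y_1^*,y_2^*,u,v\in\mathfrak{F}(y)$ with $y=y_1^*uy'vy_2^*$ and $\rho(x,y)\ge(\rho^p(x_1^*,y_1^* )+\rho^p(x',y')+\rho^p(x_2^*,y_2^* ))^{1/p}$; and (ii) for every $x'\in\mathfrak{F}(x)$ there exist $y',y_1^*,y_2^*\in\mathfrak{F}(y)$ with $y=y_1^*y'y_2^*$ and $x_1^*,x_2^*,u,v\in\mathfrak{F}(x)$ with $x=x_1^*ux'vx_2^*$ and $\rho(x,y)\ge(\rho^p(x_1^*,y_1^* )+\rho^p(x',y')+\rho^p(x_2^*,y_2^*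 ))^{1/p}$. *)

From HB Require Import structures.
From mathcomp Require Import all_boot all_order all_algebra.
From mathcomp Require Import all_classical all_reals.
From mathcomp Require Import exp.
Set Implicit Arguments. Unset Strict Implicit. Unset Printing Implicit Defensive.
Import Order.TTheory GRing.Theory Num.Theory.
Local Open Scope ring_scope.

Definition factor (Sigma : Type) (u v : seq Sigma) : Prop :=
  exists x y : seq Sigma, v = x ++ u ++ y.

Definition factors (Sigma : Type) (v : seq Sigma) : seq (seq Sigma) :=
  [seq drop i (take j v) | i <- iota 0 (size v).+1, j <- iota 0 (size v).+1].

Definition hext (R : realType) (Sigma : Type) (f : Sigma -> R) (x : seq Sigma) : R :=
  \sum_(a <- x) f a.

Definition quasi_metric (R : realType) (X : Type) (q : X -> X -> R) : Prop :=
  (forall x y, 0 <= q x y) /\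
  (forall x y, (q x y = 0 /\ q y x = 0) <-> x = y) /\
  (forall x y z, q x z <= q x y + q y z).

Definition separating (R : realType) (X : Type) (q : X -> X -> R) : Prop :=
  forall x y, q x y = 0 -> x = y.

Definition arb_decomposable (R : realType) (Sigma : Type)
  (rho : seq Sigma -> seq Sigma -> R) (p : R) : Prop :=
  forall x y : seq Sigma,
    (forall y', factor y' y ->
      exists x' x1 x2 : seq Sigma,
        [/\ factor x' x, factor x1 x, factor x2 x & x = x1 ++ x' ++ x2] /\
      exists y1 y2 u v : seq Sigma,
        [/\ factor y1 y, factor y2 y, factor u y, factor v y &
            y = y1 ++ u ++ y' ++ v ++ y2] /\
        (rho x1 y1 `^ p + rho x' y' `^ p + rho x2 y2 `^ p) `^ p^-1 <= rho x y)
 /\ (forall x', factor x' x ->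
      exists y' y1 y2 : seq Sigma,
        [/\ factor y' y, factor y1 y, factor y2 y & y = y1 ++ y' ++ y2] /\
      exists x1 x2 u v : seq Sigma,
        [/\ factor x1 x, factor x2 x, factor u x, factor v x &
            x = x1 ++ u ++ x' ++ v ++ x2] /\
        (rho x1 y1 `^ p + rho x' y' `^ p + rho x2 y2 `^ p) `^ p^-1 <= rho x y).

Definition Qterm (R : realType) (Sigma : Type) (rho : seq Sigma -> seq Sigma -> R)
  (f g : Sigma -> R) (p : R) (x y xt yt : seq Sigma) : R :=
  (hext f x - hext f xt + hext g y - hext g yt + rho xt yt `^ p) `^ p^-1.

(* Q(x,y) = min over factors xt of x and yt of y of Qterm; the empty word is a
   factor of both, so Qterm .. [::] [::] is an element of the range and the
   initial value of the fold does not change the minimum. *)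
Definition Qfun (R : realType) (Sigma : Type) (rho : seq Sigma -> seq Sigma -> R)
  (f g : Sigma -> R) (p : R) (x y : seq Sigma) : R :=
  \big[Num.min/Qterm rho f g p x y [::] [::]]_(xt <- factors x)
    \big[Num.min/Qterm rho f g p x y [::] [::]]_(yt <- factors y)
      Qterm rho f g p x y xt yt.

(* Q(x,y)^p is the cheapest way to cut x down to a factor x~ (paid by f), move
   x~ to a factor y~ of y (paid by rho^p) and grow y~ back to y (paid by g).
   If Q(x,y) = 0 then positivity of f forces x~ = x and separation forces
   x~ = y~, so x is a factor of y; mutual factors coincide.  For the triangle
   inequality take optimal pairs (x~, a) for (x, y) and (b, z~) for (y, z).
   The factors a and b of y share a factor c with f(a) + f(b) <= f(y) + f(c),
   and likewise for g.  Arbitrary decomposability cuts (x~, a) down to some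
   (x', c) and (b, z~) down to (c, z'), the Lipschitz bounds on f and g paying
   for the discarded pieces, and Minkowski's inequality in l^p glues the two
   budgets together through rho(x', z') <= rho(x', c) + rho(c, z'). *)

From Pilot Require Import Defs.
From HB Require Import structures.
From mathcomp Require Import all_boot all_order all_algebra.
From mathcomp Require Import all_classical all_reals.
From mathcomp Require Import interval_inference exp convex hoelder.
From mathcomp Require Import ring lra zify.
From Stdlib Require List.

Set Implicit Arguments.
Unset Strict Implicit.
Unset Printing Implicit Defensive.
Import Order.TTheory GRing.Theory Num.Theory.
Local Open Scope ring_scope.

(* [set_interval] also exports a [factor]. *)
Local Notation factor := Defs.factor.

Section Factors.
Variable T : Type.
Implicit Types u v w : seq T.

Lemma factor_refl v : factor v v.
Proof. by exists [::], [::]; rewrite cats0. Qed.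

Lemma factor_nil v : factor [::] v.
Proof. by exists [::], v. Qed.

Lemma factor_trans u v w : factor u v -> factor v w -> factor u w.
Proof. by move=> [a [b ->]] [c [d ->]]; exists (c ++ a), (b ++ d); rewrite -!catA. Qed.

Lemma factor_size u v : factor u v -> (size u <= size v)%N.
Proof. by move=> [a [b ->]]; rewrite !size_cat addnCA leq_addr. Qed.

Lemma factor_anti u v : factor u v -> factor v u -> u = v.
Proof.
move=> uv /factor_size; case: uv => [a [b ->]]; rewrite !size_cat.
by case: a b => [|? ?] [|? ?] /=; rewrite ?cats0 //; lia.
Qed.

Lemma factor_drop_take i j v : factor (drop i (take j v)) v.
Proof.
by exists (take i (take j v)), (drop j v); rewrite catA !cat_take_drop.
Qed.

Lemma in_factors u v : List.In u (factors v) <-> factor u v.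
Proof.
pose n := (size v).+1.
(* [factors v] is convertible to its Stdlib [List] counterpart. *)
change (List.In u (List.concat
  (List.map (fun i => List.map (fun j => drop i (take j v)) (List.seq 0 n)) (List.seq 0 n)))
  <-> factor u v).
rewrite List.in_concat; split.
  move=> [l [/List.in_map_iff [i [<- _]]]].
  by move=> /List.in_map_iff [j [<- _]]; apply: factor_drop_take.
move=> [x [y ev]].
have -> : u = drop (size x) (take (size x + size u) v).
  by rewrite ev catA take_size_cat ?size_cat // drop_size_cat.
have hv : (size x + size u <= size v)%N by rewrite ev !size_cat addnA leq_addr.
exists (List.map (fun j => drop (size x) (take j v)) (List.seq 0 n)).
by split; [apply: (List.in_map _ _ (size x)) | apply: (List.in_map _ _ (size x + size u))];
  rewrite List.in_seq /n; lia.
Qed.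

Lemma cat_split_le (s1 t1 s2 t2 : seq T) :
  s1 ++ t1 = s2 ++ t2 -> (size s1 <= size s2)%N ->
  exists2 w, s2 = s1 ++ w & t1 = w ++ t2.
Proof.
elim: s1 s2 => [|x s1 IH] [|y s2] //=; first by move=> ->; exists [::].
- by move=> ->; exists (y :: s2).
- by case=> -> /IH + /[!ltnS] => /[apply] -[w -> ->]; exists w.
Qed.

End Factors.

Section PowR.
Variable R : realType.
Implicit Types p r x y l u v a b s t : R.

Lemma powRVK p x : p != 0 -> 0 <= x -> (x `^ p^-1) `^ p = x.
Proof. by move=> p0 x0; rewrite -powRrM mulVf ?powRr1. Qed.

Lemma ler_powR2r p x y : 0 < p -> 0 <= x -> 0 <= y -> (x `^ p <= y `^ p) = (x <= y).
Proof.
move=> p0 x0 y0; apply/idP/idP => [|xy]; last by rewrite ge0_ler_powR ?nnegrE // ltW.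
by apply: contra_leT; rewrite -ltNge => yx; rewrite gt0_ltr_powR ?nnegrE.
Qed.

Lemma ler_powRV p x r : 0 < p -> 0 <= x -> 0 <= r -> (x `^ p^-1 <= r) = (x <= r `^ p).
Proof.
move=> p0 x0 r0; rewrite -(@ler_powR2r p (x `^ p^-1)) ?powR_ge0 // powRVK ?gt_eqF //.
Qed.

Lemma ger_powRV p x r : 0 < p -> 0 <= x -> 0 <= r -> (r <= x `^ p^-1) = (r `^ p <= x).
Proof.
move=> p0 x0 r0; rewrite -(@ler_powR2r p r) ?powR_ge0 // powRVK ?gt_eqF //.
Qed.

Lemma powR_le_self p x : 1 <= p -> 0 <= x <= 1 -> x `^ p <= x.
Proof.
move=> p1 /andP[x0 x1]; have [->|xn0] := eqVneq x 0.
  by rewrite powR0 // gt_eqF // (lt_le_trans ltr01).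
by apply: ge1r_powR => //; rewrite lt0r xn0 x0.
Qed.

Lemma powR_conv_le p l x y : 1 <= p -> 0 <= l <= 1 -> 0 <= x -> 0 <= y ->
  (l * x + (1 - l) * y) `^ p <= l * x `^ p + (1 - l) * y `^ p.
Proof.
move=> p1 /andP[l0 l1] x0 y0.
have := @convex_powR R p p1 (Itv01 l0 l1) x y.
by rewrite !inE /= !in_itv /= !andbT => /(_ x0 y0); rewrite !convRE.
Qed.

Lemma powR_conv_budget p l u v : 1 <= p -> 0 <= l <= 1 -> 0 <= u <= 1 -> 0 <= v <= 1 ->
  l `^ p * (1 - u `^ p) + (1 - l) `^ p * (1 - v `^ p) + (l * u + (1 - l) * v) `^ p <= 1.
Proof.
move=> p1 hl hu hv.
have hl' : 0 <= 1 - l <= 1 by case/andP: hl => ? ?; apply/andP; split; lra.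
have up1 : u `^ p <= 1 := le_trans (powR_le_self p1 hu) (proj2 (andP hu)).
have vp1 : v `^ p <= 1 := le_trans (powR_le_self p1 hv) (proj2 (andP hv)).
have lu : l `^ p * (1 - u `^ p) <= l * (1 - u `^ p).
  by rewrite ler_wpM2r ?subr_ge0 ?(powR_le_self p1 hl).
have lv : (1 - l) `^ p * (1 - v `^ p) <= (1 - l) * (1 - v `^ p).
  by rewrite ler_wpM2r ?subr_ge0 ?(powR_le_self p1 hl').
have := powR_conv_le p1 hl (proj1 (andP hu)) (proj1 (andP hv)).
move: lu lv; rewrite !mulrBr !mulr1; lra.
Qed.

Lemma div_unit_itv x y : 0 <= x <= y -> exists2 u, x = y * u & 0 <= u <= 1.
Proof.
move=> /andP[x0 xy]; have [y0|yn0] := eqVneq y 0.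
  by exists 0; rewrite ?lexx ?ler01 // mulr0; apply/le_anti; rewrite x0 -y0 xy.
have ypos : 0 < y by rewrite lt0r yn0 (le_trans x0 xy).
exists (x / y); first by rewrite mulrC divfK.
by rewrite divr_ge0 ?(ltW ypos) //= ler_pdivrMr // mul1r.
Qed.

(* Minkowski's inequality for the vectors ((s^p - a^p)^(1/p), 0, a) and
   (0, (t^p - b^p)^(1/p), b) of l^p. *)
Lemma minkowski_powR p s t a b : 1 <= p -> 0 <= a <= s -> 0 <= b <= t ->
  s `^ p - a `^ p + (t `^ p - b `^ p) + (a + b) `^ p <= (s + t) `^ p.
Proof.
move=> p1 ha hb; have p0 : p != 0 by rewrite gt_eqF // (lt_le_trans ltr01).
have [u -> hu] := div_unit_itv ha; have [v -> hv] := div_unit_itv hb.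
have s0 : 0 <= s by case/andP: ha => ? ?; lra.
have t0 : 0 <= t by case/andP: hb => ? ?; lra.
have st : 0 <= s <= s + t by apply/andP; split; lra.
have [l es hl] := div_unit_itv st.
have et : t = (s + t) * (1 - l) by rewrite mulrBr mulr1 -es; ring.
have S0 : 0 <= s + t by lra.
move: (s + t) S0 es et hl => S S0 -> -> /[dup] hl /andP[l0 l1].
have l'0 : 0 <= 1 - l by lra.
have u0 := proj1 (andP hu); have v0 := proj1 (andP hv).
have luv0 : 0 <= l * u + (1 - l) * v by rewrite addr_ge0 ?mulr_ge0.
rewrite -!mulrA -!mulrDr !(@powRM _ S) ?mulr_ge0 // !powRM //.
rewrite -[leRHS]mulr1.
apply: le_trans _ (ler_wpM2l (powR_ge0 S p) (powR_conv_budget p1 hl hu hv)).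
by rewrite le_eqVlt; apply/predU1P; left; ring.
Qed.

End PowR.

Section Weights.
Variables (R : realType) (T : Type) (F : T -> R).
Implicit Types u v : seq T.

Lemma hext_nil : hext F [::] = 0.
Proof. exact: big_nil. Qed.

Lemma hext_cat u v : hext F (u ++ v) = hext F u + hext F v.
Proof. exact: big_cat. Qed.

Hypothesis F_ge0 : forall z, 0 <= F z.

Lemma hext_ge0 u : 0 <= hext F u.
Proof. exact: sumr_ge0. Qed.

Lemma hext_factor_le u v : factor u v -> hext F u <= hext F v.
Proof.
move=> [a [b ->]]; rewrite !hext_cat.
by have := hext_ge0 a; have := hext_ge0 b; lra.
Qed.

End Weights.

Lemma factor_hext_eq (R : realType) (T : Type) (F : T -> R) (u v : seq T) :
  (forall z, 0 < F z) -> factor u v -> hext F u = hext F v -> u = v.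
Proof.
move=> F_gt0 [a [b ->]]; rewrite !hext_cat.
have F_ge0 z : 0 <= F z by exact: ltW.
have hext_eq0 w : hext F w = 0 -> w = [::].
  case: w => [//|z w]; rewrite /hext big_cons => e; exfalso.
  by have := F_gt0 z; have := hext_ge0 F_ge0 w; rewrite /hext; lra.
have := hext_ge0 F_ge0 a; have := hext_ge0 F_ge0 b => b0 a0 e.
by rewrite (hext_eq0 a) 1?(hext_eq0 b) /= ?cats0 //; lra.
Qed.

Lemma factor_overlap (R : realType) (T : Type) (y a b : seq T) :
  factor a y -> factor b y ->
  exists c, [/\ factor c a, factor c b & forall F : T -> R,
    (forall z, 0 <= F z) -> hext F a + hext F b <= hext F y + hext F c].
Proof.
move=> [p1 [s1 Ea]] [p2 [s2 Eb]].
wlog le12 : a b p1 s1 p2 s2 Ea Eb / (size p1 <= size p2)%N.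
  move=> W; have [le|/ltnW le] := leqP (size p1) (size p2); first exact: W Ea Eb le.
  have [c [ca cb H]] := W _ _ _ _ _ _ Eb Ea le.
  by exists c; split => // F F0; rewrite addrC; apply: H.
have [w _ Hw] := cat_split_le (etrans (esym Ea) Eb) le12.
rewrite {}Ea; clear Eb; have [aw|/ltnW wa] := leqP (size a) (size w).
  have [m _ ->] := cat_split_le Hw aw.
  exists [::]; split; try exact: factor_nil.
  move=> F F0; rewrite !hext_cat hext_nil.
  by have := hext_ge0 F0 p1; have := hext_ge0 F0 m; have := hext_ge0 F0 s2; lra.
have [a' -> Hs] := cat_split_le (esym Hw) wa.
have [ab|/ltnW ba] := leqP (size a') (size b).
  have [b' -> ->] := cat_split_le (esym Hs) ab.
  exists a'; split; [by exists w, [::]; rewrite cats0 | by exists [::], b' |].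
  move=> F F0; rewrite !hext_cat.
  by have := hext_ge0 F0 p1; have := hext_ge0 F0 s2; lra.
have [r -> _] := cat_split_le Hs ba.
exists b; split; [by exists w, r | exact: factor_refl |].
move=> F F0; rewrite !hext_cat.
by have := hext_ge0 F0 p1; have := hext_ge0 F0 s1; lra.
Qed.

Section BigMin.
Variables (R : realType) (T : Type) (F : T -> R) (i : R).

Lemma bigmin_le L w : List.In w L -> \big[Num.min/i]_(u <- L) F u <= F w.
Proof.
elim: L => [|x L IH] //= [->|wL]; rewrite big_cons ge_min ?lexx //.
by rewrite IH ?orbT.
Qed.

Lemma bigmin_attained L : \big[Num.min/i]_(u <- L) F u = i \/
  exists2 w, List.In w L & \big[Num.min/i]_(u <- L) F u = F w.
Proof.
elim: L => [|x L IH]; first by left; rewrite big_nil.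
rewrite big_cons; have [_|_] := leP (F x) (\big[Num.min/i]_(u <- L) F u).
  by right; exists x; first by left.
by case: IH => [->|[w wL ->]]; [left | right; exists w; first by right].
Qed.

End BigMin.

Lemma arb_decomposable_flip (R : realType) (Sigma : Type) p
    (rho : seq Sigma -> seq Sigma -> R) :
  arb_decomposable rho p -> arb_decomposable (fun x y => rho y x) p.
Proof. by move=> dec x y; have [dec1 dec2] := dec y x; split; [exact: dec2 | exact: dec1]. Qed.

Section Decomposition.
Variables (R : realType) (Sigma : Type) (p : R).
Variables (rho : seq Sigma -> seq Sigma -> R) (F : Sigma -> R).
Hypothesis p_gt0 : 0 < p.
Hypothesis F_ge0 : forall z, 0 <= F z.
Hypothesis dec : arb_decomposable rho p.
Hypothesis F_lip : forall u v, hext F u - hext F v <= rho u v `^ p.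

Lemma cost_through_factor x y c : factor c y ->
  exists2 x', factor x' x &
    rho x' c `^ p <= rho x y `^ p /\
    hext F x - hext F x' + rho x' c `^ p <= hext F y - hext F c + rho x y `^ p.
Proof.
move=> cy; have [dec_y _] := dec x y.
have [x' [x1 [x2 [[x'x _ _ ex] [y1 [y2 [u [v [[_ _ _ _ ey] dec_le]]]]]]]]] := dec_y c cy.
have rxy0 : 0 <= rho x y := le_trans (powR_ge0 _ _) dec_le.
rewrite ler_powRV ?addr_ge0 ?powR_ge0 // in dec_le.
have Fx : hext F x = hext F x1 + hext F x' + hext F x2 by rewrite ex !hext_cat addrA.
have Fy : hext F y = hext F y1 + hext F u + hext F c + hext F v + hext F y2.
  by rewrite ey !hext_cat !addrA.
exists x' => //; rewrite Fx Fy.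
have := F_lip x1 y1; have := F_lip x2 y2.
have := hext_ge0 F_ge0 u; have := hext_ge0 F_ge0 v.
have := powR_ge0 (rho x1 y1) p; have := powR_ge0 (rho x2 y2) p.
by split; lra.
Qed.

End Decomposition.

Section QuasiMetric.
Variables (R : realType) (Sigma : Type) (p : R).
Variables (rho : seq Sigma -> seq Sigma -> R) (f g : Sigma -> R).
Hypothesis p_ge1 : 1 <= p.
Hypothesis f_ge0 : forall a, 0 <= f a.
Hypothesis g_ge0 : forall a, 0 <= g a.
Hypothesis rho_ge0 : forall x y, 0 <= rho x y.

Local Notation Q := (Qfun rho f g p).
Local Notation Qbase x y xt yt :=
  (hext f x - hext f xt + hext g y - hext g yt + rho xt yt `^ p).

Lemma Q_le x y xt yt : factor xt x -> factor yt y -> Q x y <= Qterm rho f g p x y xt yt.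
Proof.
move=> /in_factors xtx /in_factors yty.
exact: le_trans (bigmin_le _ _ xtx) (bigmin_le _ _ yty).
Qed.

Lemma Q_attained x y :
  exists xt yt, [/\ factor xt x, factor yt y & Q x y = Qterm rho f g p x y xt yt].
Proof.
rewrite /Qfun; set i := Qterm _ _ _ _ x y [::] [::].
pose Qy xt := \big[Num.min/i]_(yt <- factors y) Qterm rho f g p x y xt yt.
case: (bigmin_attained Qy i (factors x)) => [->|[xt /in_factors xtx ->]].
  by exists [::], [::]; split => //; exact: factor_nil.
rewrite /Qy; case: (bigmin_attained (Qterm rho f g p x y xt) i (factors y)) => [->|[yt /in_factors yty ->]].
  by exists [::], [::]; split => //; exact: factor_nil.
by exists xt, yt.
Qed.

Lemma Q_ge0 x y : 0 <= Q x y.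
Proof. by have [xt [yt [_ _ ->]]] := Q_attained x y; apply: powR_ge0. Qed.

Lemma Qbase_ge0 x y xt yt : factor xt x -> factor yt y -> 0 <= Qbase x y xt yt.
Proof.
move=> /(hext_factor_le f_ge0) fx /(hext_factor_le g_ge0) gy.
by have := powR_ge0 (rho xt yt) p; lra.
Qed.

Lemma Qterm_powR x y xt yt : factor xt x -> factor yt y ->
  Qterm rho f g p x y xt yt `^ p = Qbase x y xt yt.
Proof.
by move=> xtx yty; rewrite powRVK ?Qbase_ge0 // gt_eqF // (lt_le_trans ltr01).
Qed.

Lemma rho_pow_le_Qbase x y xt yt : factor xt x -> factor yt y ->
  rho xt yt `^ p <= Qbase x y xt yt.
Proof.
by move=> /(hext_factor_le f_ge0) fx /(hext_factor_le g_ge0) gy; lra.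
Qed.

Lemma Qbase_through_factor x y z xa a b zb c x' z' s t :
  s `^ p = Qbase x y xa a -> t `^ p = Qbase y z b zb ->
  hext f a + hext f b <= hext f y + hext f c ->
  hext g a + hext g b <= hext g y + hext g c ->
  hext f xa - hext f x' + rho x' c `^ p <= hext f a - hext f c + rho xa a `^ p ->
  hext g zb - hext g z' + rho c z' `^ p <= hext g b - hext g c + rho b zb `^ p ->
  rho x' z' `^ p <= (rho x' c + rho c z') `^ p ->
  Qbase x z x' z' <=
    s `^ p - rho x' c `^ p + (t `^ p - rho c z' `^ p) + (rho x' c + rho c z') `^ p.
Proof. lra. Qed.

Lemma Q_refl y : rho y y = 0 -> Q y y = 0.
Proof.
move=> ryy; have p_neq0 : p != 0 by rewrite gt_eqF // (lt_le_trans ltr01).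
apply/le_anti; rewrite Q_ge0 andbT.
apply: le_trans (Q_le (factor_refl y) (factor_refl y)) _.
by rewrite /Qterm ryy powR0 // subrr add0r subrr addr0 powR0 // invr_eq0.
Qed.

Lemma Q_eq0_factor x y : (forall a, 0 < f a) -> separating rho ->
  Q x y = 0 -> factor x y.
Proof.
move=> f_gt0 rho_sep; have [xt [yt [xtx yty ->]]] := Q_attained x y.
move=> /powR_eq0_eq0 base0.
have := hext_factor_le f_ge0 xtx; have := hext_factor_le g_ge0 yty.
have := powR_ge0 (rho xt yt) p => r_ge0 gle fle.
have xt_yt : xt = yt by apply/rho_sep/(@powR_eq0_eq0 _ _ p); lra.
have xt_x : xt = x by apply: (factor_hext_eq f_gt0 xtx); lra.
by rewrite -xt_x xt_yt.
Qed.

Hypothesis rho_tri : forall x y z, rho x z <= rho x y + rho y z.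
Hypothesis rho_dec : arb_decomposable rho p.
Hypothesis f_lip : forall x y, hext f x - hext f y <= rho x y `^ p.
Hypothesis g_lip : forall x y, hext g y - hext g x <= rho x y `^ p.

Lemma Q_triangle x y z : Q x z <= Q x y + Q y z.
Proof.
have p_gt0 : 0 < p := lt_le_trans ltr01 p_ge1.
have [xa [a [xax ay ->]]] := Q_attained x y.
have [b [zb [by_ zbz ->]]] := Q_attained y z.
have [c [ca cb overlap]] := factor_overlap R ay by_.
have [x' x'xa [rx'c cost_x]] := cost_through_factor p_gt0 f_ge0 rho_dec f_lip xa ca.
have [z' z'zb [rcz' cost_z]] := cost_through_factor p_gt0 g_ge0
  (arb_decomposable_flip rho_dec) (fun u v => g_lip v u) zb cb.
rewrite /= in rcz' cost_z.
have x'x := factor_trans x'xa xax; have z'z := factor_trans z'zb zbz.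
have rx'c_le : 0 <= rho x' c <= Qterm rho f g p x y xa a.
  rewrite rho_ge0 /= ger_powRV ?Qbase_ge0 //.
  exact: le_trans rx'c (rho_pow_le_Qbase xax ay).
have rcz'_le : 0 <= rho c z' <= Qterm rho f g p y z b zb.
  rewrite rho_ge0 /= ger_powRV ?Qbase_ge0 //.
  exact: le_trans rcz' (rho_pow_le_Qbase by_ zbz).
apply: le_trans (Q_le x'x z'z) _.
rewrite ler_powRV ?Qbase_ge0 ?addr_ge0 ?powR_ge0 //.
apply: le_trans (minkowski_powR p_ge1 rx'c_le rcz'_le).
apply: Qbase_through_factor (Qterm_powR xax ay) (Qterm_powR by_ zbz)
  (overlap f f_ge0) (overlap g g_ge0) cost_x cost_z _.
by rewrite ler_powR2r ?addr_ge0 // rho_tri.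
Qed.

End QuasiMetric.

Theorem theorem5p3 (R : realType) (Sigma : Type) (p : R)
  (rho : seq Sigma -> seq Sigma -> R) (f g : Sigma -> R) :
  1 <= p ->
  quasi_metric rho -> separating rho -> arb_decomposable rho p ->
  (forall a, 0 < f a) -> (forall a, 0 <= g a) ->
  (forall x y, hext f x - hext f y <= rho x y `^ p) ->
  (forall x y, hext g y - hext g x <= rho x y `^ p) ->
  quasi_metric (Qfun rho f g p).
Proof.
move=> p_ge1 [rho_ge0 [rho_eq0 rho_tri]] rho_sep rho_dec f_gt0 g_ge0 f_lip g_lip.
have f_ge0 a : 0 <= f a := ltW (f_gt0 a).
split; first exact: Q_ge0.
split; last by move=> x y z; apply: Q_triangle.
move=> x y; split => [[Qxy Qyx] | <-].
  by apply: factor_anti; [move: Qxy | move: Qyx]; apply: Q_eq0_factor.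
have rho_yy : rho x x = 0 by have [] := (rho_eq0 x x).2 erefl.
by rewrite Q_refl.
Qed.
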